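(* For $n$ complex alternating matrices $A_1,\ldots,A_n$ of size $n$ and $n-1$ complex symmetric matrices $B_1,\ldots,B_{n-1}$ of size $n$, we have $$\sum_{\sigma\in S_n,\ \tau\in S_{n-1}}\operatorname{sgn}(\sigma)\operatorname{sgn}(\tau)\,A_{\sigma(1)}B_{\tau(1)}A_{\sigma(2)}B_{\tau(2)}\cdots A_{\sigma(n-1)}B_{\tau(n-1)}A_{\sigma(n)}=0.$$
   Context: A matrix $M$ is alternating if ${}^tM=-M$ and symmetric if ${}^tM=M$. *)

From HB Require Import structures.
From mathcomp Require Import all_boot all_order all_algebra all_fingroup.
From mathcomp Require Import reals.
From mathcomp Require Import complex.
Set Implicit Arguments. Unset Strict Implicit. Unset Printing Implicit Defensive.
Import Order.TTheory GRing.Theory Num.Theory.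
Local Open Scope ring_scope.

Definition alternating_mx (F : pzRingType) (n : nat) (M : 'M[F]_n) : Prop :=
  M^T = - M.
Definition symmetric_mx (F : pzRingType) (n : nat) (M : 'M[F]_n) : Prop :=
  M^T = M.

From HB Require Import structures.
From mathcomp Require Import all_boot all_order all_algebra all_fingroup.
From mathcomp Require Import reals complex.
Set Implicit Arguments. Unset Strict Implicit. Unset Printing Implicit Defensive.
Import Order.TTheory GRing.Theory Num.Theory.
Local Open Scope ring_scope.

(* Write S for the sum and read its terms as alternating words
   A_{s 0} B_{t 0} ... B_{t (n-1)} A_{s n} of (n+1) x (n+1) matrices.
   Transposing a word reverses it, so reindexing by the reversals shows that
   S is alternating.  If some B_j is x^T x, reversing the prefix of each word
   in front of that letter pairs the terms of x S with opposite signs, so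
   x S = 0.  As S is linear in each B_j, and symmetric matrices are spanned by
   the x^T x with x outside any proper subspace, we may assume B_j = x_j^T x_j
   with x_0, ..., x_{n-1} independent.  Then S is killed by n independent rows,
   so it has rank at most one, and an alternating matrix of rank at most one
   vanishes. *)

Section AlternatingWord.
Variables (R : comPzRingType) (m : nat).
Local Notation M := 'M[R]_m.
Implicit Types (a b : nat -> M).

Fixpoint alt_word a b (k : nat) : M :=
  if k is k'.+1 then alt_word a b k' *m b k' *m a k else a 0%N.

Lemma alt_wordE a b k : alt_word a b k = (\prod_(i < k) (a i *m b i)) *m a k.
Proof.
elim: k => [|k IHk] /=; first by rewrite big_ord0 mul1mx.
by rewrite IHk big_ord_recr /= -mulmxE !mulmxA.
Qed.

Lemma alt_wordS a b k : alt_word a b k.+1 = alt_word a b k *m b k *m a k.+1.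
Proof. by []. Qed.

Lemma alt_wordSl a b k :
  alt_word a b k.+1 = a 0%N *m b 0%N *m alt_word (fun i => a i.+1) (fun i => b i.+1) k.
Proof. by elim: k => [|k /= ->] //=; rewrite !mulmxA. Qed.

Lemma eq_alt_word a b a' b' k :
    (forall i, (i <= k)%N -> a i = a' i) -> (forall i, (i < k)%N -> b i = b' i) ->
  alt_word a b k = alt_word a' b' k.
Proof.
elim: k => [|k IHk] eq_a eq_b /=; first exact: eq_a.
rewrite eq_a // eq_b // IHk // => i lt_ik; [apply: eq_a | apply: eq_b];
  exact: ltnW.
Qed.

Lemma alt_word_split a b k l : (k < l)%N ->
  alt_word a b l =
  alt_word a b k *m b k *m
  alt_word (fun i => a (k.+1 + i)%N) (fun i => b (k.+1 + i)%N) (l - k.+1).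
Proof.
move=> lt_kl; rewrite -{1}(subnKC lt_kl); elim: (l - k.+1)%N => [|d IHd].
  by rewrite addn0 alt_wordS /= addn0.
by rewrite addnS alt_wordS IHd alt_wordS -addnS !mulmxA.
Qed.

Lemma alt_word_set a b k l Z : (k < l)%N ->
  alt_word a [eta b with k |-> Z] l =
  alt_word a b k *m Z *m
  alt_word (fun i => a (k.+1 + i)%N) (fun i => b (k.+1 + i)%N) (l - k.+1).
Proof.
move=> lt_kl; rewrite (alt_word_split _ _ lt_kl) /= eqxx.
congr (_ *m _ *m _); apply: eq_alt_word => // i.
  by move=> lt_ik /=; rewrite ltn_eqF.
by rewrite gtn_eqF // leq_addr.
Qed.

Lemma tr_alt_word a b k :
    (forall i, (a i)^T = - a i) -> (forall i, (b i)^T = b i) ->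
  (alt_word a b k)^T =
  (-1) ^+ k.+1 *: alt_word (fun i => a (k - i)%N) (fun i => b (k.-1 - i)%N) k.
Proof.
elim: k a b => [|k IHk] a b a_alt b_sym; first by rewrite /= a_alt scaleN1r.
rewrite alt_wordS !trmx_mul IHk // a_alt b_sym alt_wordSl !subn0.
rewrite mulNmx -!scalemxAr -scaleNr -mulN1r -exprS mulmxA.
congr (_ *: (_ *m _)); apply: eq_alt_word => // i _.
by rewrite /= subnS -subn1 subnAC subn1.
Qed.

End AlternatingWord.

Lemma sign_permM (R : pzRingType) (T : finType) (s1 s2 : {perm T}) :
  (-1) ^+ (s1 * s2)%g = (-1) ^+ s1 * (-1) ^+ s2 :> R.
Proof. by rewrite odd_permM signr_addb. Qed.

Section PrefixReversal.
Variable n : nat.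

Definition prefix_rev_fun (m : 'I_n.+1) (i : 'I_n) : 'I_n :=
  if (i < m)%N then insubd i (m.-1 - i)%N else i.

Lemma prefix_rev_funE m i :
  val (prefix_rev_fun m i) = if (i < m)%N then (m.-1 - i)%N else i.
Proof.
rewrite /prefix_rev_fun; case: ltnP => // lt_im; rewrite val_insubd.
by rewrite (leq_ltn_trans (leq_subr _ _)) // -ltnS (ltn_predK lt_im) ltn_ord.
Qed.

Lemma prefix_rev_funK m : involutive (prefix_rev_fun m).
Proof.
move=> i; apply: val_inj; rewrite !prefix_rev_funE.
case: (ltnP i m) => [lt_im | le_mi]; last by rewrite ltnNge le_mi.
have m_pos := ltn_predK lt_im.
have lt_m1_m : (m.-1 < m)%N by rewrite m_pos.
by rewrite (leq_ltn_trans (leq_subr _ _) lt_m1_m) subKn // -ltnS m_pos.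
Qed.

Definition prefix_rev m : 'S_n := perm (can_inj (prefix_rev_funK m)).

Lemma prefix_revE m i : val (prefix_rev m i) = if (i < m)%N then (m.-1 - i)%N else i.
Proof. by rewrite permE prefix_rev_funE. Qed.

Lemma prefix_rev2 m : (prefix_rev m * prefix_rev m)%g = 1%g.
Proof. by apply/permP => i; rewrite permM perm1 !permE prefix_rev_funK. Qed.

(* [prefix_rev m] reverses [0, m) in 'I_n and [prefix_revS m] reverses [0, m]
   in 'I_n.+1; building the latter with [lift_perm] makes the parity of the
   pair equal to that of m. *)
Definition prefix_revS (m : 'I_n.+1) : 'S_n.+1 := lift_perm ord0 m (prefix_rev m).

Lemma prefix_revSE m i : val (prefix_revS m i) = if (i <= m)%N then (m - i)%N else i.
Proof.
case: (unliftP ord0 i) => [j ->|->]; last by rewrite lift_perm_id subn0.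
rewrite lift_perm_lift /= /bump prefix_revE /=.
case: (ltnP j m) => [lt_jm | le_mj]; last by rewrite le_mj add1n.
rewrite leqNgt (leq_ltn_trans (leq_subr _ _)) ?(ltn_predK lt_jm) //.
by rewrite add0n subnS -subn1 subnAC subn1.
Qed.

Lemma sign_prefix_rev (R : pzRingType) m :
  (-1) ^+ prefix_revS m * (-1) ^+ prefix_rev m = (-1) ^+ m :> R.
Proof. by rewrite -signr_addb odd_lift_perm /= -addbA addbb addbF signr_odd. Qed.

End PrefixReversal.

Section PermutationSum.
Variables (R : comPzRingType) (m n : nat).
Local Notation M := 'M[R]_m.
Implicit Types (A : 'I_n.+1 -> M) (B : 'I_n -> M) (s : 'S_n.+1) (t : 'S_n).

(* Letters are indexed by nat so that words can be cut and shifted; the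
   out-of-range values ([inord] clamps, [bseq] is 0) are never read. *)
Definition aseq A s (i : nat) : M := A (s (inord i)).
Definition bseq B t (i : nat) : M := if insub i is Some j then B (t j) else 0.

Definition perm_sum A B : M :=
  \sum_(s : 'S_n.+1) \sum_(t : 'S_n)
    ((-1) ^+ s * (-1) ^+ t) *: alt_word (aseq A s) (bseq B t) n.

Lemma eq_perm_sum A B B' : B =1 B' -> perm_sum A B = perm_sum A B'.
Proof.
move=> eqB; apply: eq_bigr => s _; apply: eq_bigr => t _; congr (_ *: _).
by apply: eq_alt_word => // i _; rewrite /bseq; case: insub => // i'; rewrite eqB.
Qed.

Lemma perm_sumE A B :
  perm_sum A B =
  \sum_(s : 'S_n.+1) \sum_(t : 'S_n) ((-1) ^+ s * (-1) ^+ t) *: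
    ((\prod_(i < n) (A (s (widen_ord (leqnSn n) i)) *m B (t i))) *m A (s ord_max)).
Proof.
apply: eq_bigr => s _; apply: eq_bigr => t _; rewrite alt_wordE /aseq /bseq.
congr (_ *: (_ *m A (s _))); last by apply: val_inj; rewrite /= inordK.
apply: eq_bigr => i _; rewrite valK; congr (A (s _) *m _).
by apply: val_inj; rewrite /= inordK // ltnS ltnW.
Qed.

Lemma aseq_prefix_revS A s (k : 'I_n.+1) i : (i <= n)%N ->
  aseq A (prefix_revS k * s) i = aseq A s (if (i <= k)%N then k - i else i)%N.
Proof.
move=> le_in; rewrite /aseq permM; congr (A (s _)); apply: val_inj.
rewrite prefix_revSE inordK // /= inordK //; case: ifP => // _.
by rewrite ltnS (leq_trans (leq_subr _ _)) // -ltnS.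
Qed.

Lemma bseq_prefix_rev B t (k : 'I_n.+1) i :
  bseq B (prefix_rev k * t) i = bseq B t (if (i < k)%N then k.-1 - i else i)%N.
Proof.
rewrite /bseq; case: insubP => [j _ val_j | ge_in]; last first.
  rewrite -leqNgt in ge_in.
  have le_ki : (k <= i)%N by rewrite (leq_trans _ ge_in) // -ltnS.
  by rewrite ltnNge le_ki insubF // ltnNge ge_in.
by rewrite permM -val_j -prefix_revE valK.
Qed.

Lemma alt_word_prefix_rev A B s t (k : 'I_n.+1) :
    (forall j, (A j)^T = - A j) -> (forall j, (B j)^T = B j) ->
  alt_word (aseq A (prefix_revS k * s)) (bseq B (prefix_rev k * t)) k =
  (-1) ^+ k.+1 *: (alt_word (aseq A s) (bseq B t) k)^T.
Proof.
move=> A_alt B_sym; rewrite tr_alt_word; last 2 first.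
- by move=> i; rewrite /aseq A_alt.
- by move=> i; rewrite /bseq; case: insub => [j|]; rewrite ?B_sym ?trmx0.
rewrite scalerA -expr2 sqrr_sign scale1r; apply: eq_alt_word => i lt_ik.
  by rewrite aseq_prefix_revS ?lt_ik // (leq_trans lt_ik) // -ltnS.
by rewrite bseq_prefix_rev lt_ik.
Qed.

Lemma tr_perm_sum A B :
    (forall j, (A j)^T = - A j) -> (forall j, (B j)^T = B j) ->
  (perm_sum A B)^T = - perm_sum A B.
Proof.
move=> A_alt B_sym; pose k := @ord_max n.
rewrite /perm_sum -sumrN [RHS](reindex_inj (mulgI (prefix_revS k))) raddf_sum.
apply: eq_bigr => s _; rewrite -sumrN [RHS](reindex_inj (mulgI (prefix_rev k))) raddf_sum.
apply: eq_bigr => t _; rewrite [LHS]linearZ alt_word_prefix_rev // scalerA -scaleNr.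
congr (_ *: _); rewrite !sign_permM mulrACA sign_prefix_rev exprS.
by rewrite mulN1r mulrN opprK mulrAC -expr2 sqrr_sign mul1r.
Qed.

Lemma mulmx_alt_word_prefix_rev A B s t (k : 'I_n.+1) (x : 'rV[R]_m) :
    (forall j, (A j)^T = - A j) -> (forall j, (B j)^T = B j) ->
    (k < n)%N -> bseq B t k = x^T *m x ->
  x *m alt_word (aseq A (prefix_revS k * s)) (bseq B (prefix_rev k * t)) n =
  (-1) ^+ k.+1 *: (x *m alt_word (aseq A s) (bseq B t) n).
Proof.
move=> A_alt B_sym lt_kn Bk.
have Bk' : bseq B (prefix_rev k * t) k = x^T *m x by rewrite bseq_prefix_rev ltnn.
rewrite !(alt_word_split _ _ lt_kn) Bk Bk' alt_word_prefix_rev //.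
have -> : alt_word (fun i => aseq A (prefix_revS k * s) (k.+1 + i))
                   (fun i => bseq B (prefix_rev k * t) (k.+1 + i)) (n - k.+1) =
           alt_word (fun i => aseq A s (k.+1 + i)) (fun i => bseq B t (k.+1 + i)) (n - k.+1).
  apply: eq_alt_word => i le_i.
    rewrite aseq_prefix_revS; last by rewrite -(leq_add2l k.+1) subnKC in le_i.
    by rewrite leqNgt ltnS leq_addr.
  by rewrite bseq_prefix_rev ltnNge ltnW // ltnS leq_addr.
set W := alt_word (aseq A s) (bseq B t) k.
have xWx : x *m W^T *m x^T = x *m W *m x^T.
  have tr11 (u : 'M[R]_1) : u^T = u by rewrite [u]mx11_scalar tr_scalar_mx.
  by rewrite -[LHS]tr11 !trmx_mul !trmxK mulmxA.
by rewrite -!scalemxAl -scalemxAr !mulmxA xWx.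
Qed.

End PermutationSum.

Section PermutationSumLinear.
Variables (R : comPzRingType) (m n : nat).
Variables (A : 'I_n.+1 -> 'M[R]_m) (B : 'I_n -> 'M[R]_m) (j : 'I_n).

Lemma bseq_set (t : 'S_n) Z (i : nat) :
  bseq [eta B with j |-> Z] t i = [eta bseq B t with val ((t^-1)%g j) |-> Z] i.
Proof.
rewrite /= /bseq; case: insubP => [i' _ <- | i_out] /=.
  by rewrite val_eqE (canF_eq (permK t)).
by rewrite ifF //; apply: contraNF i_out => /eqP ->.
Qed.

Lemma alt_word_bseq_set (a : nat -> 'M[R]_m) (t : 'S_n) Z (k := val ((t^-1)%g j)) :
  alt_word a (bseq [eta B with j |-> Z] t) n =
  alt_word a (bseq B t) k *m Z *m
  alt_word (fun i => a (k.+1 + i)%N) (fun i => bseq B t (k.+1 + i)%N) (n - k.+1).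
Proof.
rewrite -alt_word_set ?ltn_ord //; apply: eq_alt_word => // i _; exact: bseq_set.
Qed.

Definition perm_sum_at (Z : 'M[R]_m) := perm_sum A [eta B with j |-> Z].

Lemma perm_sum_at_is_linear : linear perm_sum_at.
Proof.
move=> a X Y; rewrite /perm_sum_at /perm_sum scaler_sumr -big_split.
apply: eq_bigr => s _; rewrite scaler_sumr -big_split; apply: eq_bigr => t _ /=.
rewrite !alt_word_bseq_set mulmxDr mulmxDl -scalemxAr -scalemxAl.
by rewrite scalerDr !scalerA mulrC.
Qed.

HB.instance Definition _ :=
  GRing.isLinear.Build R 'M[R]_m 'M[R]_m *:%R perm_sum_at perm_sum_at_is_linear.

End PermutationSumLinear.

Lemma mulmx_trD (R : comPzRingType) m (u v : 'rV[R]_m) :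
  (u + v)^T *m (u + v) = u^T *m u + (u^T *m v + v^T *m u) + v^T *m v.
Proof. by rewrite [(u + v)^T]raddfD mulmxDl !mulmxDr !addrA. Qed.

Lemma mulmx_trB (R : comPzRingType) m (u v : 'rV[R]_m) :
  (u - v)^T *m (u - v) = u^T *m u - (u^T *m v + v^T *m u) + v^T *m v.
Proof.
by rewrite mulmx_trD [(- v)^T]raddfN /= mulmxN !mulNmx mulmxN opprK opprD.
Qed.

Section CharacteristicNot2.
Variables (F : fieldType) (m n : nat).
Hypothesis two_neq0 : 2 != 0 :> F.

Lemma eqN_eq0 (V : lmodType F) (v : V) : v = - v -> v = 0.
Proof.
move=> v_eqN; have two_v : (2 : F) *: v = 0 by rewrite scaler_nat mulr2n {2}v_eqN subrr.
by rewrite -[v](scalerK two_neq0) two_v scaler0.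
Qed.

Lemma alternating_rank_le1_eq0 (S : 'M[F]_m) : S^T = - S -> (\rank S <= 1)%N -> S = 0.
Proof.
move=> S_alt rank_S; apply/eqP; apply: contraTT rank_S => /matrix0Pn[i [k S_ik]].
have S_N a b : S b a = - S a b by move/matrixP/(_ a b): S_alt; rewrite !mxE => ->.
have S_diag a : S a a = 0 by apply: (eqN_eq0 (V := F^o)); exact: S_N.
pose f (r : 'I_2) := if r == 0 then i else k.
pose g (r : 'I_2) := if r == 0 then k else i.
pose d : 'rV[F]_2 := \row_r (if r == 0 then S i k else - S i k).
have sub_S : rowsub f 1%:M *m S *m colsub g 1%:M = diag_mx d.
  rewrite mulmx_colsub mulmx1 -rowsubE; apply/matrixP => r q; rewrite !mxE.
  case: r q => [[|[|//]] ?] [[|[|//]] ?]; rewrite /= ?mulr1n ?mulr0n ?S_diag //.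
have d_unit : diag_mx d \in unitmx.
  by rewrite unitmxE unitfE det_diag big_ord_recl big_ord1 !mxE /= mulrN oppr_eq0 mulf_neq0.
rewrite -ltnNge (leq_trans _ (mxrankM_maxr (rowsub f 1%:M) S)) //.
by rewrite (leq_trans _ (mxrankM_maxl _ (colsub g 1%:M))) // sub_S mxrank_unit.
Qed.

Lemma exists_notin_submx r (W : 'M[F]_(r, m)) :
  (\rank W < m)%N -> exists y : 'rV[F]_m, ~~ (y <= W)%MS.
Proof.
move=> rank_W; have /row_subPn[i i_out] : ~~ (1%:M <= W)%MS.
  by apply: contraTN rank_W => /mxrankS; rewrite mxrank1 -leqNgt.
by exists (row i 1%:M).
Qed.

Lemma linear_sym_eq0 (V : lmodType F) (f : {linear 'M[F]_m -> V}) r (W : 'M[F]_(r, m)) :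
    (\rank W < m)%N -> (forall y : 'rV[F]_m, ~~ (y <= W)%MS -> f (y^T *m y) = 0) ->
  forall Y : 'M[F]_m, Y^T = Y -> f Y = 0.
Proof.
move=> rank_W f_out; have [z z_out] := exists_notin_submx rank_W.
have f_sq (w : 'rV[F]_m) : f (w^T *m w) = 0.
  have [w_in | w_out] := boolP (w <= W)%MS; last exact: f_out.
  have wz_out (e : F) : e != 0 -> ~~ ((w + e *: z)%R <= W)%MS.
    move=> e_neq0; apply: contra z_out => wz_in.
    have ez_in : (e *: z <= W)%MS by rewrite -(addKr w (e *: z)) addmx_sub ?eqmx_opp.
    by rewrite -(scalerK e_neq0 z) scalemx_sub.
  have f_zz := f_out z z_out.
  have N1_neq0 : (-1 : F) != 0 by rewrite oppr_eq0 oner_neq0.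
  have f_plus := f_out _ (wz_out 1 (oner_neq0 F)).
  rewrite scale1r mulmx_trD linearD f_zz addr0 linearD in f_plus.
  have f_minus := f_out _ (wz_out (-1) N1_neq0).
  rewrite scaleN1r mulmx_trB linearD f_zz addr0 linearB in f_minus.
  apply: eqN_eq0.
  by rewrite {1}(subr0_eq f_minus) -(addr0_eq f_plus).
have f_pol (u v : 'rV[F]_m) : f (u^T *m v + v^T *m u) = 0.
  by have := f_sq (u + v); rewrite mulmx_trD !linearD !f_sq add0r addr0.
move=> Y Y_sym.
have Y2 : 2 *: Y = \sum_i \sum_l Y i l *:
    (('e_i : 'rV_m)^T *m 'e_l + ('e_l : 'rV_m)^T *m 'e_i).
  have -> : 2 *: Y = Y + Y^T by rewrite Y_sym scaler_nat mulr2n.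
  rewrite [in LHS](matrix_sum_delta Y) linear_sum -big_split.
  apply: eq_bigr => i _; rewrite linear_sum -big_split; apply: eq_bigr => l _.
  by rewrite linearZ /= !trmx_delta !mul_delta_mx scalerDr.
have : f (2 *: Y) = 0.
  rewrite Y2 linear_sum big1 // => i _; rewrite linear_sum big1 // => l _.
  by rewrite linearZ /= f_pol scaler0.
by rewrite linearZ => /eqP; rewrite scaler_eq0 (negbTE two_neq0) => /eqP.
Qed.

Lemma mulmx_perm_sum_rank1 (A : 'I_n.+1 -> 'M[F]_m) (B : 'I_n -> 'M[F]_m) j
    (x : 'rV[F]_m) :
    (forall j, (A j)^T = - A j) -> (forall j, (B j)^T = B j) -> B j = x^T *m x ->
  x *m perm_sum A B = 0.
Proof.
move=> A_alt B_sym Bj.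
pose pos (t : 'S_n) : 'I_n.+1 := widen_ord (leqnSn n) ((t^-1)%g j).
pose psi (t : 'S_n) := (prefix_rev (pos t) * t)%g.
have Bpos t : bseq B t (pos t) = x^T *m x by rewrite /bseq /= valK permKV Bj.
have pos_psi t : pos (psi t) = pos t.
  have psi_j : psi t ((t^-1)%g j) = j.
    rewrite permM -[RHS](permKV t j); congr (t _); apply: val_inj.
    by rewrite prefix_revE ltnn.
  by apply: val_inj; rewrite /= -{1}psi_j permK.
have psiK : involutive psi.
  by move=> t; rewrite {1}/psi pos_psi mulgA prefix_rev2 mul1g.
pose term (s : 'S_n.+1) (t : 'S_n) :=
  ((-1) ^+ s * (-1) ^+ t) *: (x *m alt_word (aseq A s) (bseq B t) n).
have term_psi s t : term (prefix_revS (pos t) * s)%g (psi t) = - term s t.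
  have pos_lt : (pos t < n)%N := ltn_ord ((t^-1)%g j).
  rewrite /term mulmx_alt_word_prefix_rev //.
  rewrite scalerA -scaleNr; congr (_ *: _).
  rewrite !sign_permM mulrACA sign_prefix_rev exprS.
  by rewrite mulN1r mulrN mulrAC -expr2 sqrr_sign mul1r.
have -> : x *m perm_sum A B = \sum_t \sum_s term s t.
  rewrite /perm_sum mulmx_sumr exchange_big; apply: eq_bigr => t _.
  by rewrite mulmx_sumr; apply: eq_bigr => s _; rewrite -scalemxAr.
apply: eqN_eq0; rewrite [LHS](reindex_inj (can_inj psiK)) -sumrN.
apply: eq_bigr => t _; rewrite [LHS](reindex_inj (mulgI (prefix_revS (pos t)))) -sumrN.
by apply: eq_bigr => s _; rewrite term_psi.
Qed.

End CharacteristicNot2.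

Section RankOneInduction.
Variables (F : fieldType) (n : nat).
Hypothesis two_neq0 : 2 != 0 :> F.
Variable A : 'I_n.+1 -> 'M[F]_n.+1.
Hypothesis A_alt : forall j, (A j)^T = - A j.

Definition rows_from k (x : 'I_n -> 'rV[F]_n.+1) : 'M[F]_(n, n.+1) :=
  \matrix_j (if (k <= j)%N then x j else 0).

Lemma rank_rows_from_set (k : 'I_n) x y : ~~ (y <= rows_from k.+1 x)%MS ->
  (\rank (rows_from k.+1 x) < \rank (rows_from k [eta x with k |-> y]))%N.
Proof.
move=> y_out; apply: rank_ltmx; rewrite ltmxE; apply/andP; split.
  apply/row_subP => i; rewrite rowK; case: ifP => [lt_ki | _]; last exact: sub0mx.
  by apply: (eq_row_sub i); rewrite rowK /= (ltnW lt_ki) ifN // -val_eqE gtn_eqF.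
apply/negP => sub_x; case/negP: y_out; apply: submx_trans sub_x.
by apply: (eq_row_sub k); rewrite rowK leqnn /= eqxx.
Qed.

Lemma perm_sum_eq0_rank1 k : (k <= n)%N ->
  forall (B : 'I_n -> 'M[F]_n.+1) (x : 'I_n -> 'rV[F]_n.+1),
    (forall j, (B j)^T = B j) -> (forall j : 'I_n, (k <= j)%N -> B j = (x j)^T *m x j) ->
    (n - k <= \rank (rows_from k x))%N ->
  perm_sum A B = 0.
Proof.
elim: k => [_|k IHk lt_kn] B x B_sym B_rank1 rank_x.
  have X_S : rows_from 0 x *m perm_sum A B = 0.
    apply/row_matrixP => j; rewrite row_mul rowK row0.
    exact: (mulmx_perm_sum_rank1 two_neq0 A_alt B_sym (B_rank1 j _)).
  apply: (alternating_rank_le1_eq0 two_neq0); first exact: tr_perm_sum.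
  rewrite subn0 in rank_x; have := mulmx0_rank_max X_S.
  move=> rank_XS; rewrite -(leq_add2l n) addn1 (leq_trans _ rank_XS) //.
  by rewrite leq_add2r.
pose kk := Ordinal lt_kn.
have -> : perm_sum A B = perm_sum_at A B kk (B kk).
  by apply: eq_perm_sum => i /=; case: eqP => [->|].
apply: (linear_sym_eq0 two_neq0 (f := perm_sum_at A B kk) (W := rows_from k.+1 x)) => //.
  by rewrite ltnS rank_leq_row.
move=> y y_out; apply: (IHk (ltnW lt_kn) _ [eta x with kk |-> y]) => [i|i le_ki|] /=.
- by case: eqP => // _; rewrite trmx_mul trmxK.
- case: eqP => // /eqP i_neq_k; apply: B_rank1.
  by rewrite ltn_neqAle le_ki andbT eq_sym.
- rewrite (leq_trans _ (rank_rows_from_set (k := kk) y_out)) //.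
  by rewrite -(subnSK lt_kn) ltnS.
Qed.

Lemma perm_sum_eq0 (B : 'I_n -> 'M[F]_n.+1) :
  (forall j, (B j)^T = B j) -> perm_sum A B = 0.
Proof.
move=> B_sym; apply: (perm_sum_eq0_rank1 (leqnn n) (x := fun=> 0)) => //.
  by move=> j; rewrite leqNgt ltn_ord.
by rewrite subnn.
Qed.

End RankOneInduction.

Theorem theorem5p1 (R : realType) (n : nat)
    (A : 'I_n.+1 -> 'M[R[i]]_n.+1) (B : 'I_n -> 'M[R[i]]_n.+1) :
  (forall k, alternating_mx (A k)) ->
  (forall k, symmetric_mx (B k)) ->
  \sum_(s : 'S_n.+1) \sum_(t : 'S_n)
     (((-1) ^+ s * (-1) ^+ t) : R[i]) *:
       ((\prod_(i < n) (A (s (widen_ord (leqnSn n) i)) *m B (t i)))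
          *m A (s ord_max))
  = 0.
Proof.
move=> A_alt B_sym; rewrite -perm_sumE.
by apply: perm_sum_eq0 => //; rewrite pnatr_eq0.
Qed.
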